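(* Let $G$ be an $N$-player normal-form game in which each player has $T$ actions, and let $f$ be a deterministic, permutation-equivariant embedding function with $f(G)=(\mathbf{A}_1,\dots,\mathbf{A}_N)$, $\mathbf{A}_p=({\bm{a}}^1_p,\dots,{\bm{a}}^T_p)$. If for some player $p$ and actions $a^i_p,a^j_p$ we have $G_r(a^i_p,a_{\neg p}) = G_r(a^j_p,a_{\neg p})$ for every player $r$ and every $a_{\neg p}\in\mathcal{A}_{\neg p}$, then ${\bm{a}}^i_p={\bm{a}}^j_p$.
   Context: A normal-form game $G$ with $N$ players, each player $p$ having actions $\mathcal{A}_p=\{a^1_p,\dots,a^T_p\}$, is given by payoff functions $G_p:\mathcal{A}=\mathcal{A}_1\times\dots\times\mathcal{A}_N\to\mathbb{R}$; $a_{\neg p}\in\mathcal{A}_{\neg p}$ denotes the actions of all players other than $p$. A strong isomorphism $\phi=((\tau_p)_{p\in[N]},\omega)$ consists of a permutation $\omega$ of the players and, for each player $p$, a bijection $\tau_p$ from the actions of $p$ to the actions of $\omega(p)$; it maps $G$ to the game $\phi(G)$ with $\phi(G)_{\omega(p)}(b)=G_p(a)$ for all $p$ and joint actions $a$, where $b_{\omega(r)}=\tau_r(a_r)$ for every player $r$. An embedding function $f$ assigns to each game a tuple $(\mathbf{A}_1,\dots,\mathbf{A}_N)$ of action embeddings ${\bm{a}}^t_p\in\mathbb{R}^D$, one per action; $\phi$ acts on such a tuple by placing the embedding of action $a^i_p$ at the position of action $\tau_p(a^i_p)$ of player $\omega(p)$. $f$ is (permutation-)equivariant if $f(\phi(G))=\phi(f(G))$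 for every game $G$ and strong isomorphism $\phi$; deterministic means $f$ is a single-valued function of the game. *)

From mathcomp Require Import all_boot all_order all_algebra all_fingroup.
Set Implicit Arguments. Unset Strict Implicit. Unset Printing Implicit Defensive.
Import GRing.Theory Num.Theory.
Local Open Scope ring_scope.

(* Players are 'I_N, each player's actions are 'I_T (action a^t_p is t). *)
Definition joint (N T : nat) := {ffun 'I_N -> 'I_T}.

Definition game (R : Type) (N T : nat) := 'I_N -> joint N T -> R.

(* Action embeddings: emb p t is the vector bm{a}^t_p in R^D. *)
Definition embedding (R : Type) (N T D : nat) := 'I_N -> 'I_T -> 'rV[R]_D.

Definition upd_action N T (a : joint N T) (p : 'I_N) (x : 'I_T) : joint N T :=
  [ffun q => if q == p then x else a q].

(* A strong isomorphism ((tau_p)_p, omega): omega permutes players and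
   tau p is the bijection from actions of p to actions of omega p
   (both are 'I_T). *)
Record strong_iso (N T : nat) := StrongIso {
  si_omega : {perm 'I_N};
  si_tau : 'I_N -> {perm 'I_T} }.

(* phi(G)_{omega p}(b) = G_p(a) where b_{omega r} = tau_r(a_r); equivalently
   phi(G)_q(b) = G_{omega^-1 q}(a) with a_r = tau_r^-1 (b_{omega r}). *)
Definition act_joint N T (phi : strong_iso N T) (b : joint N T) : joint N T :=
  [ffun r => ((si_tau phi r)^-1)%g (b (si_omega phi r))].

Definition act_game R N T (phi : strong_iso N T) (G : game R N T) : game R N T :=
  fun q b => G (((si_omega phi)^-1)%g q) (act_joint phi b).

(* The embedding of a^i_p is placed at position tau_p(a^i_p) of player omega(p). *)
Definition act_emb R N T D (phi : strong_iso N T) (E : embedding R N T D)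
  : embedding R N T D :=
  fun q t => let p := ((si_omega phi)^-1)%g q in E p (((si_tau phi p)^-1)%g t).

Definition equivariant R N T D (f : game R N T -> embedding R N T D) :=
  forall (G : game R N T) (phi : strong_iso N T),
    f (act_game phi G) = act_emb phi (f G).

From mathcomp Require Import all_boot all_order all_algebra all_fingroup.
From Stdlib Require Import FunctionalExtensionality.

Set Implicit Arguments.
Unset Strict Implicit.
Unset Printing Implicit Defensive.

(* The transposition of a^i_p and a^j_p (all other players and actions fixed)
   is a strong isomorphism that leaves G unchanged when these two actions are
   payoff-equivalent. Equivariance then gives f G = phi (f G), and reading this
   at position (p, i) yields a^i_p = a^j_p. *)

Section SwapActions.

Variables (N T : nat) (p : 'I_N) (i j : 'I_T).

Definition swap_iso : strong_iso N T :=
  StrongIso 1%g (fun r => if r == p then tperm i j else 1%g).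

Lemma upd_action_same (a : joint N T) (x : 'I_T) :
  a p = x -> upd_action a p x = a.
Proof. by move=> apx; apply/ffunP => r; rewrite ffunE; case: eqP => // ->. Qed.

Lemma act_joint_swap (b : joint N T) :
  act_joint swap_iso b = upd_action b p (tperm i j (b p)).
Proof.
apply/ffunP => r; rewrite !ffunE /= perm1.
by case: eqP => [->|_]; rewrite ?tpermV // invg1 perm1.
Qed.

Definition payoff_equivalent (R : Type) (G : game R N T) :=
  forall (r : 'I_N) (a : joint N T),
    G r (upd_action a p i) = G r (upd_action a p j).

Lemma act_game_swap (R : Type) (G : game R N T) :
  payoff_equivalent G -> act_game swap_iso G = G.
Proof.
move=> eqG; apply: functional_extensionality => q.
apply: functional_extensionality => b.
rewrite /act_game /= invg1 perm1 act_joint_swap.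
case: tpermP => [bpi|bpj|_ _]; last by rewrite upd_action_same.
- by rewrite -[in RHS](upd_action_same bpi) eqG.
- by rewrite -[in RHS](upd_action_same bpj) eqG.
Qed.

Lemma act_emb_swap (R : Type) (D : nat) (E : embedding R N T D) :
  act_emb swap_iso E p i = E p j.
Proof. by rewrite /act_emb /= invg1 perm1 eqxx tpermV tpermL. Qed.

End SwapActions.

Lemma equivariant_fixed (R : Type) (N T D : nat)
    (f : game R N T -> embedding R N T D) (G : game R N T)
    (phi : strong_iso N T) :
  equivariant f -> act_game phi G = G -> f G = act_emb phi (f G).
Proof. by move=> eqf phiG; rewrite -eqf phiG. Qed.

Theorem proposition1 (R : realFieldType) (N T D : nat)
  (f : game R N T -> embedding R N T D) (G : game R N T)
  (p : 'I_N) (i j : 'I_T) :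
  equivariant f ->
  (forall (r : 'I_N) (a : joint N T),
      G r (upd_action a p i) = G r (upd_action a p j)) ->
  f G p i = f G p j.
Proof.
move=> eqf eqG.
have fixG := equivariant_fixed eqf (act_game_swap eqG).
by rewrite {1}fixG act_emb_swap.
Qed.
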